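(* Given two finite-valued logics $\mathbf{M}_1$ and $\mathbf{M}_2$ over the same propositional language, it is decidable whether $\mathrm{Taut}(\mathbf{M}_1)=\mathrm{Taut}(\mathbf{M}_2)$, and it is decidable whether $\mathbf{M}_1\unlhd\mathbf{M}_2$, i.e., whether $\mathrm{Taut}(\mathbf{M}_1)\subseteq\mathrm{Taut}(\mathbf{M}_2)$.
   Context: A propositional language has variables $X_1,X_2,\ldots$ and finitely many connectives with arities. A finite-valued logic $\mathbf{M}$ is given by a finite set $V(\mathbf{M})$ of truth values, designated values $V^+(\mathbf{M})\subseteq V(\mathbf{M})$, and a truth function for each connective. A valuation maps variables to truth values and extends to formulas via the truth functions; a tautology is a formula designated under every valuation; $\mathrm{Taut}(\mathbf{M})$ is the set of tautologies. *)

From mathcomp Require Import all_boot.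
Set Implicit Arguments. Unset Strict Implicit. Unset Printing Implicit Defensive.

(* A language: the list of arities of its finitely many connectives;
   connective number i has arity nth 0 L i. *)
Definition language := seq nat.

Inductive form : Type :=
| Var of nat
| App of nat & seq form.

Fixpoint wf (L : language) (phi : form) : bool :=
  match phi with
  | Var _ => true
  | App i args =>
      [&& i < size L, size args == nth 0 L i &
          (fix wfs (s : seq form) : bool :=
             match s with [::] => true | a :: s' => wf L a && wfs s' end) args]
  end.

(* A finite-valued logic, given by finite data: the truth values are
   0, 1, ..., nv (i.e. nv.+1 values), the designated values are those in
   [des], and the truth table of connective i is the list [nth [::] tab i],
   whose entry at index (a_1 ... a_k written in base nv.+1) is the value of
   the connective on arguments a_1, ..., a_k (taken modulo nv.+1, so every
   datum denotes a well-defined logic; missing entries default to 0). *)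
Record logic : Type := Logic {
  nv : nat;
  des : seq nat;
  tab : seq (seq nat)
}.

Definition nvals (M : logic) : nat := (nv M).+1.

Definition designated (M : logic) (x : nat) : bool := x \in des M.

Definition tindex (b : nat) (args : seq nat) : nat :=
  foldl (fun acc a => acc * b + a) 0 args.

Definition truth_fun (M : logic) (i : nat) (args : seq nat) : nat :=
  nth 0 (nth [::] (tab M) i) (tindex (nvals M) args) %% nvals M.

Fixpoint feval (M : logic) (v : nat -> nat) (phi : form) : nat :=
  match phi with
  | Var n => v n
  | App i args =>
      truth_fun M i
        ((fix evs (s : seq form) : seq nat :=
            match s with [::] => [::] | a :: s' => feval M v a :: evs s' end) args)
  end.

Definition valuation (M : logic) (v : nat -> nat) : Prop :=
  forall n, v n < nvals M.

Definition Taut (L : language) (M : logic) (phi : form) : Prop :=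
  wf L phi /\ forall v, valuation M v -> designated M (feval M v phi).

Inductive prog : Type :=
| PZero
| PSucc
| PProj of nat
| PComp of prog & seq prog
| PPrec of prog & prog
| PMu of prog.

Fixpoint peval (fuel : nat) (p : prog) (xs : seq nat) {struct fuel} : option nat :=
  match fuel with
  | 0 => None
  | k.+1 =>
    match p with
    | PZero => Some 0
    | PSucc => Some (nth 0 xs 0).+1
    | PProj i => Some (nth 0 xs i)
    | PComp f gs =>
        let rs := map (fun g => peval k g xs) gs in
        if all (fun r => r != None) rs
        then peval k f (map (fun r => odflt 0 r) rs)
        else None
    | PPrec f g =>
        match xs with
        | [::] => peval k f [::]
        | 0 :: rest => peval k f rest
        | x.+1 :: rest =>
            match peval k (PPrec f g) (x :: rest) with
            | Some y => peval k g (x :: y :: rest)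
            | None => None
            end
        end
    | PMu f =>
        (fix search (m : nat) (n : nat) : option nat :=
           match m with
           | 0 => None
           | m'.+1 =>
               match peval k f (n :: xs) with
               | Some 0 => Some n
               | Some _ => search m' n.+1
               | None => None
               end
           end) k 0
    end
  end.

Definition cpair (a b : nat) : nat := 'C(a + b + 1, 2) + b.

Fixpoint enc_seq (T : Type) (e : T -> nat) (s : seq T) : nat :=
  match s with
  | [::] => 0
  | x :: s' => (cpair (e x) (enc_seq e s')).+1
  end.

Definition enc_logic (M : logic) : nat :=
  cpair (nv M) (cpair (enc_seq id (des M)) (enc_seq (enc_seq id) (tab M))).

Definition enc_inst (L : language) (M1 M2 : logic) : nat :=
  cpair (enc_seq id L) (cpair (enc_logic M1) (enc_logic M2)).

Definition decidable_inst (Q : language -> logic -> logic -> Prop) : Prop :=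
  exists p : prog, forall (L : language) (M1 M2 : logic),
    exists (k b : nat),
      peval k p [:: enc_inst L M1 M2] = Some b /\ (b != 0 <-> Q L M1 M2).

From mathcomp Require Import all_boot.
From Stdlib Require List.
From Stdlib Require Import Classical.
Set Implicit Arguments. Unset Strict Implicit. Unset Printing Implicit Defensive.

(* Write K for the number of truth values of M2.  If Taut(M1) is not contained in Taut(M2),
   there is a counterexample in the variables X_0, ..., X_(K-1): when an M1-tautology phi
   fails under an M2-valuation v, substituting X_(v n) for X_n turns it into one that fails
   under the identity valuation.  A formula in K variables has a pair of value tables, one
   per logic, over all valuations of these variables, and the pairs that arise form the
   finite closure of the pairs of the variables under the connectives.  Hence either this
   closure, listed in full, shows that every pair designated everywhere in M1 is designated
   everywhere in M2, which certifies inclusion, or a derivation of a pair designated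
   everywhere in M1 but not in M2 certifies non-inclusion.  Certificates of both kinds are
   coded by numbers and checked by a formula with bounded quantifiers, compiled to a
   mu-free program; a mu-search for the least code of a certificate of either kind always
   halts, and the kind of certificate found is the answer. *)

Lemma nat_of_bool_neq0 (b : bool) : (b != 0 :> nat) = b.
Proof. by case: b. Qed.

Lemma List_Forall_all (T : Type) (P : T -> Prop) (p : pred T) s :
  List.Forall P s -> (forall a, P a -> p a) -> all p s.
Proof. by move=> Ps Pp; elim: Ps => //= a s' /Pp -> _. Qed.

Lemma List_Forall_map (T U : Type) (P : T -> Prop) (f g : T -> U) s :
  List.Forall P s -> (forall a, P a -> f a = g a) -> map f s = map g s.
Proof. by move=> Ps fg; elim: Ps => //= a s' /fg -> _ ->. Qed.

Lemma List_Forall_nth (T : Type) (x0 : T) (P : T -> Prop) s :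
  List.Forall P s -> forall l, l < size s -> P (nth x0 s l).
Proof. by elim=> // a s' Pa _ IH [|l] //= /IH. Qed.

Lemma fin_choice (T : Type) (x0 : T) (P : nat -> T -> Prop) k :
  (forall l, l < k -> exists y, P l y) -> exists g : nat -> T, forall l, l < k -> P l (g l).
Proof.
elim: k => [|k IHk] exP; first by exists (fun=> x0).
have [g Pg] := IHk (fun l lt_l => exP l (ltnW lt_l)).
have [y Py] := exP k (ltnSn k).
exists (fun l => if l == k then y else g l) => l; rewrite ltnS leq_eqVlt.
by case: eqP => [->|_] //= /Pg.
Qed.

Lemma bounded_ex_max (P : nat -> Prop) n0 B :
  P n0 -> (forall m, P m -> m <= B) -> exists2 n, P n & forall m, P m -> m <= n.
Proof.
move=> Pn0; elim: B => [|B IHB] le_B; first by exists n0 => // m /le_B; rewrite leqn0 => /eqP->.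
have [PB|notPB] := classic (P B.+1); first by exists B.+1.
apply: IHB => m Pm; have := le_B m Pm; rewrite leq_eqVlt => /orP[/eqP eq_m|//].
by rewrite eq_m in Pm.
Qed.

Lemma foldl_map (T U R : Type) (f : R -> U -> R) (g : T -> U) z s :
  foldl f z (map g s) = foldl (fun acc a => f acc (g a)) z s.
Proof. by elim: s z => //= a s IH z. Qed.

Lemma eq_in_mkseq (T : Type) (f g : nat -> T) n :
  (forall l, l < n -> f l = g l) -> mkseq f n = mkseq g n.
Proof. by move=> fg; apply/eq_in_map => l; rewrite mem_iota add0n => /fg. Qed.

Lemma map_as_mkseq (T U : Type) (x0 : T) (F : T -> U) s :
  map F s = mkseq (fun l => F (nth x0 s l)) (size s).
Proof. by rewrite -[s in map _ s](mkseq_nth x0) /mkseq -map_comp. Qed.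

Lemma map_mkseq (T U : Type) (F : T -> U) (g : nat -> T) n :
  map F (mkseq g n) = mkseq (fun l => F (g l)) n.
Proof. by rewrite -map_comp. Qed.

Lemma size_undup_rcons (T : eqType) (s : seq T) y :
  y \notin s -> size (undup (rcons s y)) = (size (undup s)).+1.
Proof.
elim: s => //= z s IHs; rewrite in_cons negb_or mem_rcons in_cons => /andP[neq_yz y_s].
by rewrite eq_sym (negbTE neq_yz) /=; case: (z \in s); rewrite /= IHs.
Qed.

Fixpoint allseqs (n N : nat) : seq (seq nat) :=
  if N is N'.+1 then [seq a :: s | a <- iota 0 n, s <- allseqs n N'] else [:: [::]].

Lemma mem_allseqs n s : all (gtn n) s -> s \in allseqs n (size s).
Proof.
elim: s => //= a s IHs /andP[lt_a /IHs s_in].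
by apply: (allpairs_f (fun a s => a :: s)); rewrite // mem_iota.
Qed.

(** * Running programs *)

Fixpoint mu_search (F : nat -> option nat) (m n : nat) : option nat :=
  match m with
  | 0 => None
  | m'.+1 => match F n with
             | Some 0 => Some n
             | Some _ => mu_search F m' n.+1
             | None => None
             end
  end.

Lemma peval_mu k f xs :
  peval k.+1 (PMu f) xs = mu_search (fun n => peval k f (n :: xs)) k 0.
Proof.
(* Generalize the bound of the search, but not the fuel [k] left for [f]. *)
by rewrite /=; move: {2 4}k 0; elim=> [|m IHm] n //=; rewrite IHm.
Qed.

Lemma peval_comp k f gs xs :
  peval k.+1 (PComp f gs) xs =
  let rs := map (fun g => peval k g xs) gs in
  if all (fun r => r != None) rs then peval k f (map (odflt 0) rs) else None.
Proof. by []. Qed.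

Lemma peval_precS k f g x xs :
  peval k.+1 (PPrec f g) (x.+1 :: xs) =
  if peval k (PPrec f g) (x :: xs) is Some y then peval k g [:: x, y & xs] else None.
Proof. by []. Qed.

Lemma mu_search_mono (F G : nat -> option nat) m n y :
  (forall n z, F n = Some z -> G n = Some z) ->
  mu_search F m n = Some y -> mu_search G m.+1 n = Some y.
Proof.
move=> FG; elim: m n => [|m IHm] n //=.
by case E: (F n) => [[|a]|] //; rewrite (FG _ _ E) //; apply: IHm.
Qed.

Lemma peval_fuelS k p xs y : peval k p xs = Some y -> peval k.+1 p xs = Some y.
Proof.
elim: k p xs y => [|k IHk] p xs y //.
case: p => [||i|f gs|f g|f] //.
- rewrite !peval_comp /=.
  have evalS : forall gs, all (fun r => r != None) [seq peval k g xs | g <- gs] ->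
      [seq peval k.+1 g xs | g <- gs] = [seq peval k g xs | g <- gs].
    elim=> [|g gs' IHgs] // /andP[]; rewrite !map_cons.
    by case E: (peval k g xs) => [z|] // _ /IHgs->; rewrite (IHk _ _ _ E).
  by case: ifP => // all_some; rewrite evalS // all_some; apply: IHk.
- case: xs => [|[|x] xs]; try exact: IHk.
  rewrite !peval_precS; case E: (peval k (PPrec f g) (x :: xs)) => [z|] //.
  by rewrite (IHk _ _ _ E); apply: IHk.
- by rewrite !peval_mu; apply: mu_search_mono => n z; apply: IHk.
Qed.

Lemma peval_fuel_mono k k' p xs y :
  k <= k' -> peval k p xs = Some y -> peval k' p xs = Some y.
Proof. by move=> /subnK <-; elim: (k' - k) => // d IH /IH /peval_fuelS. Qed.

Definition computes (p : prog) (xs : seq nat) (y : nat) : Prop :=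
  exists k, peval k p xs = Some y.

Lemma computes_uniform (ps : nat -> prog) (xss : nat -> seq nat) (ys : nat -> nat) n :
  (forall s, s < n -> computes (ps s) (xss s) (ys s)) ->
  exists K, forall k s, K <= k -> s < n -> peval k (ps s) (xss s) = Some (ys s).
Proof.
elim: n => [|n IHn] comp; first by exists 0.
have [K evalK] := IHn (fun s lt_sn => comp s (ltnW lt_sn)).
have [k0 eval_n] := comp n (ltnSn n).
exists (maxn K k0) => k s; rewrite geq_max => /andP[le_K le_k0].
rewrite ltnS leq_eqVlt => /orP[/eqP->|lt_sn]; first exact: peval_fuel_mono eval_n.
exact: evalK.
Qed.

Lemma computes_comp f gs xs ys y :
  List.Forall2 (fun g y => computes g xs y) gs ys -> computes f ys y ->
  computes (PComp f gs) xs y.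
Proof.
move=> comp_gs [k0 eval_f].
have [K evalK] : exists K, forall k, K <= k -> map (fun g => peval k g xs) gs = map Some ys.
  elim: comp_gs => [|g y0 gs' ys' [k1 eval_g] _ [K evalK]]; first by exists 0.
  exists (maxn k1 K) => k; rewrite geq_max => /andP[le_k1 le_K].
  by rewrite /= (peval_fuel_mono le_k1 eval_g) evalK.
exists (maxn K k0).+1; rewrite peval_comp /= evalK ?leq_maxl // all_map.
have -> : all (fun y => Some y != None) ys by apply/allP.
by rewrite -map_comp map_id; apply: peval_fuel_mono eval_f; apply: leq_maxr.
Qed.

Lemma mu_search_first (G : nat -> option nat) (F : nat -> nat) n m j :
  F n = 0 -> (forall s, s < n -> F s != 0) -> (forall s, s <= n -> G s = Some (F s)) ->
  j <= n -> n < j + m -> mu_search G m j = Some n.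
Proof.
move=> Fn0 Fs_neq0 GF; elim: m j => [|m IHm] j le_jn; first by rewrite addn0 ltnNge le_jn.
rewrite /= GF // addnS => lt_n; case: ltngtP le_jn => // [lt_jn _|-> _]; last by rewrite Fn0.
by case: (F j) (Fs_neq0 j lt_jn) => // a _; apply: IHm; rewrite // addSnnS.
Qed.

Lemma computes_mu f xs (F : nat -> nat) n :
  (forall s, computes f (s :: xs) (F s)) -> F n = 0 -> (forall s, s < n -> F s != 0) ->
  computes (PMu f) xs n.
Proof.
move=> comp_f Fn0 Fs_neq0.
have [K evalK] := @computes_uniform (fun=> f) (fun s => s :: xs) F n.+1 (fun s _ => comp_f s).
exists (maxn K n.+1).+1; rewrite peval_mu; apply: (mu_search_first (F := F)) => //.
  by move=> s le_sn; apply: evalK; rewrite ?leq_maxl.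
by rewrite add0n leq_maxr.
Qed.

Definition prog_nested_ind (P : prog -> Prop) (P0 : P PZero) (PS : P PSucc)
    (Pproj : forall i, P (PProj i))
    (Pcomp : forall f gs, P f -> List.Forall P gs -> P (PComp f gs))
    (Pprec : forall f g, P f -> P g -> P (PPrec f g)) (Pmu : forall f, P f -> P (PMu f)) :
    forall p, P p :=
  fix F p := match p with
  | PZero => P0
  | PSucc => PS
  | PProj i => Pproj i
  | PComp f gs =>
      Pcomp f gs (F f)
        ((fix Fs gs := if gs is g :: gs' return List.Forall P gs
                       then List.Forall_cons g (F g) (Fs gs') else List.Forall_nil P) gs)
  | PPrec f g => Pprec f g (F f) (F g)
  | PMu f => Pmu f (F f)
  end.

Fixpoint mu_free (p : prog) : bool :=
  match p with
  | PComp f gs => mu_free f && all mu_free gs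
  | PPrec f g => mu_free f && mu_free g
  | PMu _ => false
  | _ => true
  end.

(* The value computed by a [mu_free] program (the [PMu] case is junk). *)
Fixpoint pval (p : prog) (xs : seq nat) : nat :=
  match p with
  | PZero => 0
  | PSucc => (nth 0 xs 0).+1
  | PProj i => nth 0 xs i
  | PComp f gs => pval f (map (fun g => pval g xs) gs)
  | PPrec f g =>
      if xs is x :: xs' then
        (fix rec n := if n is n'.+1 then pval g [:: n', rec n' & xs'] else pval f xs') x
      else pval f [::]
  | PMu _ => 0
  end.

Lemma pval_precS f g x xs :
  pval (PPrec f g) (x.+1 :: xs) = pval g [:: x, pval (PPrec f g) (x :: xs) & xs].
Proof. by []. Qed.

Lemma computes_pval p xs : mu_free p -> computes p xs (pval p xs).
Proof.
elim/prog_nested_ind: p xs => [||i|f gs IHf IHgs|f g IHf IHg|//] xs; try by exists 1.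
- case/andP=> mf_f mf_gs; apply: computes_comp (IHf _ mf_f).
  elim: IHgs mf_gs => [|g gs' IHg _ IHgs] //= /andP[mf_g mf_gs'].
  by constructor; [apply: IHg | apply: IHgs].
- case/andP=> mf_f mf_g; case: xs => [|x xs].
    by have [k eval_f] := IHf [::] mf_f; exists k.+1.
  elim: x => [|x [k1 eval_x]]; first by have [k eval_f] := IHf xs mf_f; exists k.+1.
  have [k2 eval_g] := IHg (x :: pval (PPrec f g) (x :: xs) :: xs) mf_g.
  exists (maxn k1 k2).+1; rewrite peval_precS (peval_fuel_mono (leq_maxl _ _) eval_x).
  exact: peval_fuel_mono (leq_maxr _ _) eval_g.
Qed.

(** * Primitive recursive programs *)

(* Once its value is known, each program is made opaque, so that [simpl] does not unfold it
   inside [pval]. *)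
Definition pconst (n : nat) : prog := iter n (fun p => PComp PSucc [:: p]) PZero.
Lemma pval_const n xs : pval (pconst n) xs = n.
Proof. by elim: n => //= n ->. Qed.
Lemma mu_free_const n : mu_free (pconst n).
Proof. by elim: n => //= n ->. Qed.
Opaque pconst.

Definition padd := PPrec (PProj 0) (PComp PSucc [:: PProj 1]).
Lemma pval_add a b xs : pval padd [:: a, b & xs] = a + b.
Proof. by elim: a => // a IH; rewrite pval_precS IH. Qed.
Opaque padd.

Definition pmul := PPrec PZero (PComp padd [:: PProj 1; PProj 2]).
Lemma pval_mul a b xs : pval pmul [:: a, b & xs] = a * b.
Proof. by elim: a => // a IH; rewrite pval_precS IH /= pval_add mulSn addnC. Qed.
Opaque pmul.

Definition ppred := PPrec PZero (PProj 0).
Lemma pval_pred a xs : pval ppred (a :: xs) = a.-1.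
Proof. by case: a. Qed.
Opaque ppred.

Definition psubr := PPrec (PProj 0) (PComp ppred [:: PProj 1]).
Lemma pval_subr b a xs : pval psubr [:: b, a & xs] = a - b.
Proof. by elim: b => [|b IH]; rewrite ?subn0 // pval_precS IH /= pval_pred subnS. Qed.
Opaque psubr.

Definition psub := PComp psubr [:: PProj 1; PProj 0].
Lemma pval_sub a b xs : pval psub [:: a, b & xs] = a - b.
Proof. exact: pval_subr. Qed.
Opaque psub.

Definition psgn := PPrec PZero (pconst 1).
Lemma pval_sgn a xs : pval psgn (a :: xs) = (a != 0).
Proof. by case: a => [|a] /=; rewrite ?pval_const. Qed.
Opaque psgn.

Definition pltn := PComp psgn [:: PComp psub [:: PProj 1; PProj 0]].
Lemma pval_ltn a b xs : pval pltn [:: a, b & xs] = (a < b).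
Proof. by rewrite /= pval_sub pval_sgn subn_eq0 ltnNge. Qed.
Opaque pltn.

Definition pif := PPrec (PProj 1) (PProj 2).
Lemma pval_if c a b xs : pval pif [:: c, a, b & xs] = if c != 0 then a else b.
Proof. by case: c. Qed.
Opaque pif.

Definition pbin2 := PPrec PZero (PComp padd [:: PProj 1; PProj 0]).
Lemma pval_bin2 n xs : pval pbin2 (n :: xs) = 'C(n, 2).
Proof. by elim: n => // n IH; rewrite pval_precS IH /= pval_add binS bin1. Qed.
Opaque pbin2.

Definition pcpair :=
  PComp padd [:: PComp pbin2 [:: PComp PSucc [:: PComp padd [:: PProj 0; PProj 1]]]; PProj 1].
Lemma pval_cpair a b xs : pval pcpair [:: a, b & xs] = cpair a b.
Proof. by rewrite /= pval_add pval_bin2 pval_add /cpair addn1. Qed.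
Opaque pcpair.

Definition pcons := PComp PSucc [:: pcpair].
Lemma pval_cons a c xs : pval pcons [:: a, c & xs] = (cpair a c).+1.
Proof. by rewrite /= pval_cpair. Qed.
Opaque pcons.

Definition pexpr := PPrec (pconst 1) (PComp pmul [:: PProj 1; PProj 2]).
Lemma pval_expr b a xs : pval pexpr [:: b, a & xs] = a ^ b.
Proof.
elim: b => [|b IH]; first by rewrite /= pval_const.
by rewrite pval_precS IH /= pval_mul expnS mulnC.
Qed.
Opaque pexpr.

Definition pexp := PComp pexpr [:: PProj 1; PProj 0].
Lemma pval_exp a b xs : pval pexp [:: a, b & xs] = a ^ b.
Proof. exact: pval_expr. Qed.
Opaque pexp.

(* [bmin P b] is the least [s < b] such that [P s], or [b] if there is none. *)
Fixpoint bmin (P : pred nat) (b : nat) : nat :=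
  if b is b'.+1 then
    if bmin P b' < b' then bmin P b' else if P b' then b' else b
  else 0.

Lemma bmin_le (P : pred nat) b : bmin P b <= b.
Proof. by elim: b => //= b IH; case: ifP => _; [exact: ltnW | case: ifP]. Qed.

Lemma bmin_found (P : pred nat) b : bmin P b < b -> P (bmin P b).
Proof. by elim: b => //= b IH; case: ifP => [lt _|_]; [exact: IH | case: ifP; rewrite ?ltnn]. Qed.

Lemma bmin_first (P : pred nat) b s : s < bmin P b -> ~~ P s.
Proof.
elim: b => //= b IH; case: ifP => [_|ge_b]; first exact: IH.
have bminE : bmin P b = b by apply/eqP; rewrite eqn_leq bmin_le leqNgt ge_b.
case: ifP => Pb lt_s; first by apply: IH; rewrite bminE.
move: lt_s; rewrite ltnS leq_eqVlt => /orP[/eqP->|lt_s]; first by rewrite Pb.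
by apply: IH; rewrite bminE.
Qed.

Lemma bmin_ltP (P : pred nat) b : reflect (exists2 s, s < b & P s) (bmin P b < b).
Proof.
apply: (iffP idP) => [lt_b|[s lt_sb Ps]]; first by exists (bmin P b); rewrite ?bmin_found.
by rewrite ltnNge; apply: contraL Ps => le_b; apply: bmin_first; apply: leq_trans le_b.
Qed.

Lemma bmin_eq (P : pred nat) b n : P n -> (forall s, s < n -> ~~ P s) -> n < b -> bmin P b = n.
Proof.
move=> Pn n_first lt_nb; case: (ltngtP (bmin P b) n) => // lt.
  by have := n_first _ lt; rewrite bmin_found // (ltn_trans lt lt_nb).
by have := bmin_first lt; rewrite Pn.
Qed.

Lemma eq_bmin (P Q : pred nat) b : P =1 Q -> bmin P b = bmin Q b.
Proof. by move=> PQ; elim: b => //= b ->; rewrite PQ. Qed.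

Definition pbmin (F : prog) := PPrec PZero
  (PComp pif [:: PComp pltn [:: PProj 1; PProj 0]; PProj 1;
     PComp pif [:: PComp F [:: PProj 0; PProj 2]; PProj 0; PComp PSucc [:: PProj 0]]]).
Lemma pval_bmin F b y xs :
  pval (pbmin F) [:: b, y & xs] = bmin (fun s => pval F [:: s; y] != 0) b.
Proof.
by elim: b => // b IH; rewrite pval_precS IH /= pval_if /= pval_ltn pval_if; case: (_ < _).
Qed.
Opaque pbmin.

(* Inverting [cpair]: [cpair a b] lies on the diagonal [a + b] of the Cantor enumeration. *)
Definition cdiag z := bmin (fun d => z < 'C(d.+2, 2)) z.+1.
Definition csnd z := z - 'C((cdiag z).+1, 2).
Definition cfst z := cdiag z - csnd z.

Lemma cdiag_pair a b : cdiag (cpair a b) = a + b.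
Proof.
rewrite /cdiag /cpair addn1; apply: bmin_eq.
- by rewrite [X in _ < X]binS bin1 ltn_add2l ltnS leq_addl.
- move=> s lt_s; rewrite -leqNgt; apply: leq_trans (leq_addr _ _); exact: leq_bin2l.
- by rewrite ltnS (leq_trans _ (leq_addr _ _)) // binS bin1 leq_addl.
Qed.

Lemma csnd_pair a b : csnd (cpair a b) = b.
Proof. by rewrite /csnd cdiag_pair {1}/cpair addn1 addKn. Qed.

Lemma cfst_pair a b : cfst (cpair a b) = a.
Proof. by rewrite /cfst cdiag_pair csnd_pair addnK. Qed.

(* Decoding [enc_seq id]; the [.-1] undoes the shift that reserves [0] for the empty list. *)
Definition ctl c := csnd c.-1.
Definition chd c := cfst c.-1.
Definition cdrop i c := iter i ctl c.
Definition cnth c i := chd (cdrop i c).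

Lemma cdrop_enc i s : cdrop i (enc_seq id s) = enc_seq id (drop i s).
Proof.
elim: i s => [|i IH] [|x s] //; last by rewrite /cdrop iterSr /= /ctl /= csnd_pair -IH.
by rewrite /cdrop; elim: i {IH} => //= i ->; apply: (csnd_pair 0 0).
Qed.

Lemma cnth_enc s i : cnth (enc_seq id s) i = nth 0 s i.
Proof.
rewrite /cnth cdrop_enc -[i in RHS]addn0 -nth_drop /chd.
by case: (drop i s) => [|x s'] /=; [apply: (cfst_pair 0 0) | rewrite cfst_pair].
Qed.

Lemma cdrop_enc_neq0 i s : (cdrop i (enc_seq id s) != 0) = (i < size s).
Proof. by rewrite cdrop_enc -subn_gt0 -size_drop; case: (drop i s). Qed.

Lemma size_le_enc s : size s <= enc_seq id s.
Proof. by elim: s => //= x s IH; rewrite ltnS (leq_trans IH) // /cpair leq_addl. Qed.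

Definition pdiag :=
  PComp (pbmin (PComp pltn [:: PProj 1;
                             PComp pbin2 [:: PComp PSucc [:: PComp PSucc [:: PProj 0]]]]))
    [:: PComp PSucc [:: PProj 0]; PProj 0].
Lemma pval_diag z xs : pval pdiag (z :: xs) = cdiag z.
Proof.
by rewrite /= pval_bmin; apply: eq_bmin => s; rewrite /= pval_bin2 pval_ltn; case: (_ < _).
Qed.
Opaque pdiag.

Definition psnd := PComp psub [:: PProj 0; PComp pbin2 [:: PComp PSucc [:: pdiag]]].
Lemma pval_snd z xs : pval psnd (z :: xs) = csnd z.
Proof. by rewrite /= pval_diag pval_bin2 pval_sub. Qed.
Opaque psnd.

Definition pfst := PComp psub [:: pdiag; psnd].
Lemma pval_fst z xs : pval pfst (z :: xs) = cfst z.
Proof. by rewrite /= pval_diag pval_snd pval_sub. Qed.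
Opaque pfst.

Definition pdrop := PPrec (PProj 0) (PComp psnd [:: PComp ppred [:: PProj 1]]).
Lemma pval_drop i c xs : pval pdrop [:: i, c & xs] = cdrop i c.
Proof. by elim: i => // i IH; rewrite pval_precS IH /= pval_pred pval_snd. Qed.
Opaque pdrop.

Definition pnth := PComp pfst [:: PComp ppred [:: PComp pdrop [:: PProj 1; PProj 0]]].
Lemma pval_nth c i xs : pval pnth [:: c, i & xs] = cnth c i.
Proof. by rewrite /= pval_drop pval_pred pval_fst. Qed.
Opaque pnth.

Definition pdiv := PComp pif [:: PProj 1;
  PComp (pbmin (PComp pltn [:: PComp pfst [:: PProj 1];
                  PComp pmul [:: PComp PSucc [:: PProj 0]; PComp psnd [:: PProj 1]]]))
     [:: PComp PSucc [:: PProj 0]; pcpair];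
  PZero].
Lemma pval_div a b xs : pval pdiv [:: a, b & xs] = a %/ b.
Proof.
rewrite /= pval_if /= pval_bmin pval_cpair; case: b => [|b]; first by rewrite divn0.
rewrite (@eq_bmin _ (fun s => a < s.+1 * b.+1)) => [|s]; last first.
  by rewrite /= pval_fst pval_mul pval_snd cfst_pair csnd_pair pval_ltn; case: (_ < _).
apply: bmin_eq; first exact: ltn_ceil.
  by move=> s lt_s; rewrite -leqNgt (leq_trans _ (leq_divM a b.+1)) // leq_mul.
by rewrite ltnS leq_div.
Qed.
Opaque pdiv.

Definition pmod := PComp psub [:: PProj 0; PComp pmul [:: PProj 1; pdiv]].
Lemma pval_mod a b xs : pval pmod [:: a, b & xs] = a %% b.
Proof. by rewrite /= pval_div pval_mul pval_sub {1}(divn_eq a b) mulnC addKn. Qed.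
Opaque pmod.

(** * Bounded arithmetic expressions *)

Inductive aexp : Type :=
| EV of nat | EK of nat
| EAdd of aexp & aexp | ESub of aexp & aexp | EMul of aexp & aexp
| EPow of aexp & aexp | EDiv of aexp & aexp | EMod of aexp & aexp
| EFst of aexp | ESnd of aexp
| ENth of aexp & aexp | ECDrop of aexp & aexp
| EIter of aexp & aexp & aexp
| ELt of aexp & aexp | EEq of aexp & aexp
| ENot of aexp | EAnd of aexp & aexp | EOr of aexp & aexp | EImp of aexp & aexp
| EEx of aexp & aexp | EAll of aexp & aexp.

(* Variables are de Bruijn indices into the environment [r]; [EIter], [EEx] and [EAll]
   bind their loop variables (for [EIter n init step]: the accumulator, then the index). *)
Fixpoint aeval (e : aexp) (r : seq nat) : nat :=
  match e with
  | EV i => nth 0 r i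
  | EK n => n
  | EAdd a b => aeval a r + aeval b r
  | ESub a b => aeval a r - aeval b r
  | EMul a b => aeval a r * aeval b r
  | EPow a b => aeval a r ^ aeval b r
  | EDiv a b => aeval a r %/ aeval b r
  | EMod a b => aeval a r %% aeval b r
  | EFst a => cfst (aeval a r)
  | ESnd a => csnd (aeval a r)
  | ENth c i => cnth (aeval c r) (aeval i r)
  | ECDrop i c => cdrop (aeval i r) (aeval c r)
  | EIter n init step =>
      foldl (fun acc k => aeval step [:: acc, k & r]) (aeval init r) (iota 0 (aeval n r))
  | ELt a b => aeval a r < aeval b r
  | EEq a b => aeval a r == aeval b r
  | ENot a => aeval a r == 0
  | EAnd a b => (aeval a r != 0) && (aeval b r != 0)
  | EOr a b => (aeval a r != 0) || (aeval b r != 0)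
  | EImp a b => (aeval a r != 0) ==> (aeval b r != 0)
  | EEx b body => bmin (fun s => aeval body (s :: r) != 0) (aeval b r) < aeval b r
  | EAll b body => ~~ (bmin (fun s => aeval body (s :: r) == 0) (aeval b r) < aeval b r)
  end.

Definition op2 f a b := PComp f [:: a; b].
Definition pbind (body : prog) := PComp body [:: op2 pcons (PProj 0) (PProj 1)].

(* The compiled program takes the environment as a single argument, coded by [enc_seq id]. *)
Fixpoint compile (e : aexp) : prog :=
  match e with
  | EV i => op2 pnth (PProj 0) (pconst i)
  | EK n => pconst n
  | EAdd a b => op2 padd (compile a) (compile b)
  | ESub a b => op2 psub (compile a) (compile b)
  | EMul a b => op2 pmul (compile a) (compile b)
  | EPow a b => op2 pexp (compile a) (compile b)
  | EDiv a b => op2 pdiv (compile a) (compile b)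
  | EMod a b => op2 pmod (compile a) (compile b)
  | EFst a => PComp pfst [:: compile a]
  | ESnd a => PComp psnd [:: compile a]
  | ENth c i => op2 pnth (compile c) (compile i)
  | ECDrop i c => op2 pdrop (compile i) (compile c)
  | EIter n init step =>
      op2 (PPrec (compile init)
             (PComp (compile step) [:: op2 pcons (PProj 1) (op2 pcons (PProj 0) (PProj 2))]))
        (compile n) (PProj 0)
  | ELt a b => op2 pltn (compile a) (compile b)
  | EEq a b => PComp pif [:: op2 padd (op2 psub (compile a) (compile b))
                                   (op2 psub (compile b) (compile a)); pconst 0; pconst 1]
  | ENot a => PComp pif [:: compile a; pconst 0; pconst 1]
  | EAnd a b => PComp pif [:: compile a; PComp psgn [:: compile b]; pconst 0]
  | EOr a b => PComp pif [:: compile a; pconst 1; PComp psgn [:: compile b]]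
  | EImp a b => PComp pif [:: compile a; PComp psgn [:: compile b]; pconst 1]
  | EEx b body => op2 pltn (op2 (pbmin (pbind (compile body))) (compile b) (PProj 0)) (compile b)
  | EAll b body =>
      PComp pif [:: op2 pltn (op2 (pbmin (pbind (PComp pif [:: compile body; pconst 0; pconst 1])))
                                 (compile b) (PProj 0)) (compile b);
                    pconst 0; pconst 1]
  end.

Lemma mu_free_compile e : mu_free (compile e).
Proof.
by elim: e => //= *; repeat (apply/andP; split); rewrite ?mu_free_const.
Qed.

Lemma pval_bind body s r :
  pval (pbind body) [:: s; enc_seq id r] = pval body [:: enc_seq id (s :: r)].
Proof. by rewrite /= pval_cons. Qed.

Lemma pval_compile e r : pval (compile e) [:: enc_seq id r] = aeval e r.
Proof.
elim: e r => /=.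
- by move=> i r; rewrite pval_nth pval_const cnth_enc.
- by move=> n r; rewrite pval_const.
- by move=> a IHa b IHb r; rewrite pval_add IHa IHb.
- by move=> a IHa b IHb r; rewrite pval_sub IHa IHb.
- by move=> a IHa b IHb r; rewrite pval_mul IHa IHb.
- by move=> a IHa b IHb r; rewrite pval_exp IHa IHb.
- by move=> a IHa b IHb r; rewrite pval_div IHa IHb.
- by move=> a IHa b IHb r; rewrite pval_mod IHa IHb.
- by move=> a IHa r; rewrite pval_fst IHa.
- by move=> a IHa r; rewrite pval_snd IHa.
- by move=> a IHa b IHb r; rewrite pval_nth IHa IHb.
- by move=> a IHa b IHb r; rewrite pval_drop IHa IHb.
- move=> n IHn init IHinit step IHstep r; rewrite IHn.
  elim: (aeval n r) => [|k IHk]; first by rewrite /= IHinit.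
  by rewrite IHk !pval_cons -[k.+1]addn1 iotaD foldl_cat add0n /= -IHstep.
- by move=> a IHa b IHb r; rewrite pval_ltn IHa IHb.
- move=> a IHa b IHb r; rewrite pval_if /= pval_add !pval_sub IHa IHb !pval_const.
  by rewrite addn_eq0 !subn_eq0 -eqn_leq; case: eqP.
- by move=> a IHa r; rewrite pval_if IHa !pval_const; case: (aeval a r).
- by move=> a IHa b IHb r; rewrite pval_if IHa /= pval_sgn IHb pval_const; case: (aeval a r).
- by move=> a IHa b IHb r; rewrite pval_if IHa /= pval_sgn IHb pval_const; case: (aeval a r).
- by move=> a IHa b IHb r; rewrite pval_if IHa /= pval_sgn IHb pval_const; case: (aeval a r).
- move=> b IHb body IHbody r; rewrite pval_ltn pval_bmin IHb; congr (_ < _).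
  by apply: eq_bmin => s; rewrite pval_bind IHbody.
- move=> b IHb body IHbody r; rewrite pval_if /= pval_ltn pval_bmin IHb !pval_const.
  rewrite (@eq_bmin _ (fun s => aeval body (s :: r) == 0)); first by case: (_ < _).
  move=> s; rewrite pval_bind /= pval_if !pval_const; have /= -> := IHbody (s :: r).
  by case: (aeval body _).
Qed.

Fixpoint aholds (e : aexp) (r : seq nat) : Prop :=
  match e with
  | ELt a b => aeval a r < aeval b r
  | EEq a b => aeval a r = aeval b r
  | ENot a => ~ aholds a r
  | EAnd a b => aholds a r /\ aholds b r
  | EOr a b => aholds a r \/ aholds b r
  | EImp a b => aholds a r -> aholds b r
  | EEx b body => exists s, s < aeval b r /\ aholds body (s :: r)
  | EAll b body => forall s, s < aeval b r -> aholds body (s :: r)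
  | _ => aeval e r != 0
  end.

Lemma aevalP e r : aeval e r != 0 <-> aholds e r.
Proof.
elim: e r => //= [a _ b _|a _ b _|a IHa|a IHa b IHb|a IHa b IHb|a IHa b IHb|b _ body IH|b _ body IH]
  r; rewrite nat_of_bool_neq0.
- by [].
- by split=> /eqP.
- by rewrite -IHa; split=> [/eqP-> //|/negP]; rewrite negbK.
- by rewrite -IHa -IHb; split=> /andP.
- by rewrite -IHa -IHb; split=> /orP.
- by rewrite -IHa -IHb; split=> /implyP.
- split=> [/bmin_ltP[s lt_s /IH body_s]|[s [lt_s /IH body_s]]]; first by exists s.
  by apply/bmin_ltP; exists s.
- split=> [no_cex s lt_s|all_body].
    apply/IH; apply: contraNN no_cex => /eqP body0.
    by apply/bmin_ltP; exists s; rewrite // body0.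
  apply/negP => /bmin_ltP[s lt_s /eqP body0].
  by have /IH := all_body s lt_s; rewrite body0.
Qed.

(** * Certificates *)

(* Components of the code [x = enc_inst L M1 M2] of an instance; [j = true] selects [M1]. *)
Definition xlang x := cfst x.
Definition xlogic x (j : bool) := (if j then cfst else csnd) (csnd x).
Definition xnv x j := cfst (xlogic x j).
Definition xdes x j := cfst (csnd (xlogic x j)).
Definition xtab x j := csnd (csnd (xlogic x j)).

(* A witness [w] codes a list of [cfst w] nodes; node [t] is [cnth (csnd w) t], coding the
   pair of value tables of a formula in the two logics and a tag (0 for the variable
   [cdat w t], [i.+1] for connective [i] applied to the nodes coded by the list [cdat w t]).
   Row [r] of a table stands for the valuation whose [v]-th value is [digit n r v]. *)
Definition cell w (j : bool) t r := cnth ((if j then cfst else csnd) (cfst (cnth (csnd w) t))) r.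
Definition ctag w t := cfst (csnd (cnth (csnd w) t)).
Definition cdat w t := csnd (csnd (cnth (csnd w) t)).
Definition digit n r v := r %/ n ^ v %% n.
(* The bound [i < D] is harmless: a list is shorter than its code ([size_le_enc]). *)
Definition cmem y D := exists i, i < D /\ cnth D i = y /\ cdrop i D != 0.
Definition capply n T i (g : nat -> nat) k :=
  cnth (cnth T i) (foldl (fun acc l => acc * n + g l) 0 (iota 0 k)) %% n.

Definition both (P : bool -> Prop) := P true /\ P false.

(* Tables range over valuations of the first [xnv x false + 1] variables. *)
Definition nrows x j := (xnv x j + 1) ^ (xnv x false + 1).

Definition tables_are w x t (f : bool -> nat -> nat) :=
  both (fun j => forall r, r < nrows x j -> cell w j t r = f j r).
Definition var_tables x v j r := digit (xnv x j + 1) r v.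
Definition app_tables w x i (arg : nat -> nat) j r :=
  capply (xnv x j + 1) (xtab x j) i (fun l => cell w j (arg l) r) (cnth (xlang x) i).
Definition designated_col w x j t := forall r, r < nrows x j -> cmem (cell w j t r) (xdes x j).

(* Up to conversion, these specifications are what [aholds] makes of the expressions
   [incl_cert] and [nonincl_cert] below ([incl_certP], [nonincl_certP]), which dictates their
   shape.  In [incl_cert_spec] the arguments of connective [i] range over all tuples of nodes,
   coded by the base-[cfst w] digits of [u]. *)
Definition incl_cert_spec w x :=
  (forall v, v < xnv x false + 1 -> exists t, t < cfst w /\ tables_are w x t (var_tables x v)) /\
  ((forall i, i < xlang x -> cdrop i (xlang x) != 0 ->
     forall u, u < cfst w ^ cnth (xlang x) i ->
     exists t, t < cfst w /\ tables_are w x t (app_tables w x i (digit (cfst w) u))) /\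
   (forall t, t < cfst w -> designated_col w x true t -> designated_col w x false t)).

Definition valid_node w x t :=
  (ctag w t = 0 /\ (cdat w t < xnv x false + 1 /\ tables_are w x t (var_tables x (cdat w t)))) \/
  (~ ctag w t = 0 /\ (cdrop (ctag w t - 1) (xlang x) != 0 /\
     ((forall l, l < cnth (xlang x) (ctag w t - 1) -> cnth (cdat w t) l < t) /\
      tables_are w x t (app_tables w x (ctag w t - 1) (cnth (cdat w t)))))).

Definition nonincl_cert_spec w x :=
  (forall t, t < cfst w -> valid_node w x t) /\
  (exists t, t < cfst w /\ (designated_col w x true t /\ ~ designated_col w x false t)).

(* Expressions written with binders as functions: [d] is the number of enclosing binders
   and the variable bound at depth [d0] has index [d - d0.+1] ([Nat.sub], so that [simpl]
   computes it).  At depth [0] the environment is [[:: w; x]]. *)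
Definition hexp := nat -> aexp.
Definition hvar (d0 : nat) : hexp := fun d => EV (Nat.sub d d0.+1).
Definition hAll (b : hexp) (body : hexp -> hexp) : hexp := fun d => EAll (b d) (body (hvar d) d.+1).
Definition hEx (b : hexp) (body : hexp -> hexp) : hexp := fun d => EEx (b d) (body (hvar d) d.+1).
Definition hAnd (a b : hexp) : hexp := fun d => EAnd (a d) (b d).
Definition hOr (a b : hexp) : hexp := fun d => EOr (a d) (b d).
Definition hImp (a b : hexp) : hexp := fun d => EImp (a d) (b d).
Definition hNot (a : hexp) : hexp := fun d => ENot (a d).
Definition hEq (a b : hexp) : hexp := fun d => EEq (a d) (b d).
Definition hLt (a b : hexp) : hexp := fun d => ELt (a d) (b d).
Definition hK n : hexp := fun _ => EK n.

Definition hW : hexp := fun d => EV d.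
Definition hX : hexp := fun d => EV d.+1.
Definition hlang : hexp := fun d => EFst (hX d).
Definition hlogic (j : bool) : hexp := fun d => (if j then EFst else ESnd) (ESnd (hX d)).
Definition hbase j : hexp := fun d => EAdd (EFst (hlogic j d)) (EK 1).
Definition hdes j : hexp := fun d => EFst (ESnd (hlogic j d)).
Definition htab j : hexp := fun d => ESnd (ESnd (hlogic j d)).
Definition hnrows j : hexp := fun d => EPow (hbase j d) (hbase false d).
Definition hsize : hexp := fun d => EFst (hW d).
Definition hnode (t : hexp) : hexp := fun d => ENth (ESnd (hW d)) (t d).
Definition hcell j (t r : hexp) : hexp :=
  fun d => ENth ((if j then EFst else ESnd) (EFst (hnode t d))) (r d).
Definition htag (t : hexp) : hexp := fun d => EFst (ESnd (hnode t d)).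
Definition hdat (t : hexp) : hexp := fun d => ESnd (ESnd (hnode t d)).
Definition hdigit (n r v : hexp) : hexp := fun d => EMod (EDiv (r d) (EPow (n d) (v d))) (n d).
Definition hmem (y D : hexp) : hexp :=
  hEx D (fun i d => EAnd (EEq (ENth (D d) (i d)) (y d)) (ECDrop (i d) (D d))).
Definition hdesignated j t : hexp := hAll (hnrows j) (fun r => hmem (hcell j t r) (hdes j)).
Definition happly j (i k : hexp) (arg : hexp -> hexp) : hexp :=
  fun d => EMod (ENth (ENth (htab j d) (i d))
                      (EIter (k d) (EK 0) (EAdd (EMul (EV 0) (hbase j d.+2)) (arg (hvar d) d.+2))))
                (hbase j d).
Definition harity (i : hexp) : hexp := fun d => ENth (hlang d) (i d).
Definition hin_lang (i : hexp) : hexp := fun d => ECDrop (i d) (hlang d).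
Definition htables (t : hexp) (f : bool -> hexp -> hexp) : hexp :=
  hAnd (hAll (hnrows true) (fun r => hEq (hcell true t r) (f true r)))
       (hAll (hnrows false) (fun r => hEq (hcell false t r) (f false r))).
Definition hconn (t : hexp) : hexp := fun d => ESub (htag t d) (EK 1).
Definition hargs (t l : hexp) : hexp := fun d => ENth (hdat t d) (l d).

Definition incl_cert : hexp :=
  hAnd (hAll (hbase false) (fun v => hEx hsize (fun t =>
          htables t (fun j r => hdigit (hbase j) r v))))
  (hAnd (hAll hlang (fun i => hImp (hin_lang i)
          (hAll (fun d => EPow (hsize d) (harity i d)) (fun u => hEx hsize (fun t =>
             htables t (fun j r => happly j i (harity i)
                                     (fun l => hcell j (hdigit hsize u l) r)))))))
        (hAll hsize (fun t => hImp (hdesignated true t) (hdesignated false t)))).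

Definition hvalid_node (t : hexp) : hexp :=
  hOr (hAnd (hEq (htag t) (hK 0))
        (hAnd (hLt (hdat t) (hbase false)) (htables t (fun j r => hdigit (hbase j) r (hdat t)))))
      (hAnd (hNot (hEq (htag t) (hK 0)))
        (hAnd (hin_lang (hconn t))
          (hAnd (hAll (harity (hconn t)) (fun l => hLt (hargs t l) t))
            (htables t (fun j r => happly j (hconn t) (harity (hconn t))
                                     (fun l => hcell j (hargs t l) r)))))).

Definition nonincl_cert : hexp :=
  hAnd (hAll hsize hvalid_node)
       (hEx hsize (fun t => hAnd (hdesignated true t) (hNot (hdesignated false t)))).

Lemma incl_certP w x : aholds (incl_cert 0) [:: w; x] <-> incl_cert_spec w x.
Proof. exact: iff_refl. Qed.

Lemma nonincl_certP w x : aholds (nonincl_cert 0) [:: w; x] <-> nonincl_cert_spec w x.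
Proof. exact: iff_refl. Qed.

Definition form_nested_ind (P : form -> Prop) (Pvar : forall n, P (Var n))
    (Papp : forall i args, List.Forall P args -> P (App i args)) : forall f, P f :=
  fix F f := match f with
  | Var n => Pvar n
  | App i args =>
      Papp i args
        ((fix Fs args := if args is a :: args' return List.Forall P args
                         then List.Forall_cons a (F a) (Fs args') else List.Forall_nil P) args)
  end.

Lemma feval_App M v i args : feval M v (App i args) = truth_fun M i (map (feval M v) args).
Proof. by rewrite /=; congr truth_fun; elim: args => //= a s ->. Qed.

Lemma wf_App L i args :
  wf L (App i args) = [&& i < size L, size args == nth 0 L i & all (wf L) args].
Proof. by rewrite /=; congr [&& _, _ & _]; elim: args => //= a s ->. Qed.

Fixpoint rename (g : nat -> nat) (f : form) : form :=
  match f with Var n => Var (g n) | App i args => App i (map (rename g) args) end.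

Fixpoint vars_below (K : nat) (f : form) : bool :=
  match f with Var n => n < K | App _ args => all (vars_below K) args end.

Lemma rename_App g i args : rename g (App i args) = App i (map (rename g) args).
Proof. by []. Qed.

Lemma feval_rename M v g f : feval M v (rename g f) = feval M (v \o g) f.
Proof.
elim/form_nested_ind: f => // i args IH.
by rewrite rename_App !feval_App -map_comp; congr truth_fun; apply: List_Forall_map IH _.
Qed.

Lemma wf_rename L g f : wf L (rename g f) = wf L f.
Proof.
elim/form_nested_ind: f => // i args IH.
rewrite rename_App !wf_App size_map all_map; congr [&& _, _ & _].
by elim: IH => //= a s -> _ ->.
Qed.

Lemma vars_below_rename K g f : (forall n, g n < K) -> vars_below K (rename g f).
Proof.
move=> g_lt; elim/form_nested_ind: f => //= i args IH.
by rewrite all_map; apply: List_Forall_all IH _.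
Qed.

Lemma eq_feval M u v f : u =1 v -> feval M u f = feval M v f.
Proof.
move=> uv; elim/form_nested_ind: f => // i args IH.
by rewrite !feval_App; congr truth_fun; apply: List_Forall_map IH _.
Qed.

Lemma feval_eq_below M K u v f :
  vars_below K f -> (forall n, n < K -> u n = v n) -> feval M u f = feval M v f.
Proof.
move=> f_below uv; elim/form_nested_ind: f f_below => [n|i args IH]; first exact: uv.
rewrite !feval_App /= => args_below; congr truth_fun.
by elim: IH args_below => //= a s IHa _ IHs /andP[/IHa-> /IHs->].
Qed.

Lemma digit_lt n r v : 0 < n -> digit n r v < n.
Proof. exact: ltn_pmod. Qed.

Lemma digits_exist n K (u : nat -> nat) :
  0 < n -> (forall v, v < K -> u v < n) ->
  exists2 r, r < n ^ K & forall v, v < K -> digit n r v = u v.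
Proof.
move=> n_gt0; elim: K => [|K IHK] u_lt; first by exists 0.
have [r lt_r digit_r] := IHK (fun v lt_v => u_lt v (ltnW lt_v)).
have uK_lt := u_lt K (ltnSn K).
exists (u K * n ^ K + r).
  rewrite expnS (leq_trans (_ : _ < (u K).+1 * n ^ K)) ?leq_mul2r ?uK_lt ?orbT //.
  by rewrite mulSn addnC ltn_add2r.
move=> v; rewrite ltnS leq_eqVlt => /orP[/eqP->|lt_vK].
  by rewrite /digit divnMDl ?expn_gt0 ?n_gt0 // divn_small // addn0 modn_small.
have -> : n ^ K = n ^ (K - v).-1 * n * n ^ v.
  by rewrite -expnSr prednK ?subn_gt0 // -expnD subnK // ltnW.
by rewrite /digit !mulnA divnMDl ?expn_gt0 ?n_gt0 // modnMDl; apply: digit_r.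
Qed.

Definition side (M1 M2 : logic) (j : bool) := if j then M1 else M2.

Section InstanceCode.
Variables (L : language) (M1 M2 : logic).
Local Notation x := (enc_inst L M1 M2).

Lemma xlang_enc : xlang x = enc_seq id L.
Proof. by rewrite /xlang cfst_pair. Qed.

Lemma xlogic_enc j : xlogic x j = enc_logic (side M1 M2 j).
Proof. by case: j; rewrite /xlogic csnd_pair ?cfst_pair ?csnd_pair. Qed.

Lemma xnv_enc j : xnv x j = nv (side M1 M2 j).
Proof. by rewrite /xnv xlogic_enc cfst_pair. Qed.

Lemma xdes_enc j : xdes x j = enc_seq id (des (side M1 M2 j)).
Proof. by rewrite /xdes xlogic_enc csnd_pair cfst_pair. Qed.

Lemma xtab_enc j : xtab x j = enc_seq (enc_seq id) (tab (side M1 M2 j)).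
Proof. by rewrite /xtab xlogic_enc !csnd_pair. Qed.

Lemma nrows_enc j : nrows x j = (nv (side M1 M2 j) + 1) ^ (nv M2 + 1).
Proof. by rewrite /nrows !xnv_enc. Qed.

End InstanceCode.

Lemma cmem_enc y s : cmem y (enc_seq id s) <-> y \in s.
Proof.
split=> [[i [_ [<- /[!cdrop_enc_neq0] lt_i]]]|y_s]; first by rewrite cnth_enc mem_nth.
exists (index y s); rewrite cnth_enc nth_index // cdrop_enc_neq0 index_mem y_s.
by split=> //; apply: leq_trans (size_le_enc s); rewrite index_mem.
Qed.

Lemma capply_enc M i g k :
  capply (nv M + 1) (enc_seq (enc_seq id) (tab M)) i g k = truth_fun M i (mkseq g k).
Proof.
rewrite /capply /truth_fun /nvals addn1.
have -> : cnth (enc_seq (enc_seq id) (tab M)) i = enc_seq id (nth [::] (tab M) i).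
  have -> : enc_seq (enc_seq id) (tab M) = enc_seq id (map (enc_seq id) (tab M)).
    by elim: (tab M) => //= s ss ->.
  rewrite cnth_enc; case: (ltnP i (size (tab M))) => [lt_i|le_i]; first by rewrite (nth_map [::]).
  by rewrite !nth_default ?size_map.
rewrite cnth_enc /tindex; congr (nth _ _ _ %% _).
by rewrite foldl_map.
Qed.

Lemma tables_areP w x t f :
  tables_are w x t f <-> forall j r, r < nrows x j -> cell w j t r = f j r.
Proof. by split=> [[T F] []|E]; [apply: T | apply: F | split; apply: E]. Qed.

(** * Soundness of the certificates *)

Definition formula_tables M1 M2 f j r :=
  feval (side M1 M2 j) (digit (nv (side M1 M2 j) + 1) r) f.

Section Soundness.
Variables (L : language) (M1 M2 : logic) (w : nat).
Local Notation x := (enc_inst L M1 M2).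

Lemma app_tables_enc i arg j r :
  app_tables w x i arg j r =
  truth_fun (side M1 M2 j) i (mkseq (fun l => cell w j (arg l) r) (nth 0 L i)).
Proof. by rewrite /app_tables xnv_enc xtab_enc xlang_enc cnth_enc capply_enc. Qed.

Lemma cert_size_gt0 : incl_cert_spec w x -> 0 < cfst w.
Proof.
case=> [has_vars _]; have [|t [lt_t _]] := has_vars 0; first by rewrite addn1.
exact: leq_ltn_trans lt_t.
Qed.

Lemma incl_cert_tables f :
  incl_cert_spec w x -> wf L f -> vars_below (nv M2 + 1) f ->
  exists2 t, t < cfst w & tables_are w x t (formula_tables M1 M2 f).
Proof.
move=> cert; have w_gt0 := cert_size_gt0 cert; case: cert => [has_vars [closed _]].
elim/form_nested_ind: f => [v _ /= lt_v|i args IH].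
  have [|t [lt_t /tables_areP tabs]] := has_vars v; first by rewrite xnv_enc.
  by exists t => //; apply/tables_areP => j r /tabs->; rewrite /var_tables xnv_enc.
rewrite wf_App => /and3P[lt_i /eqP size_args /(all_nthP (Var 0)) wf_args].
move=> /(all_nthP (Var 0)) below_args.
have arg_nodes l : l < size args -> exists t,
    t < cfst w /\ tables_are w x t (formula_tables M1 M2 (nth (Var 0) args l)).
  move=> lt_l; have [t] := List_Forall_nth (Var 0) IH lt_l (wf_args l lt_l) (below_args l lt_l).
  by exists t.
have [g g_tabs] := fin_choice 0 arg_nodes.
have [u lt_u digit_u] := @digits_exist _ (size args) g w_gt0 (fun l lt_l => proj1 (g_tabs l lt_l)).
have [|||t [lt_t /tables_areP tabs]] := closed i _ _ u.
- by rewrite xlang_enc (leq_trans lt_i) // size_le_enc.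
- by rewrite xlang_enc cdrop_enc_neq0.
- by rewrite xlang_enc cnth_enc -size_args.
exists t => //; apply/tables_areP => j r lt_r.
rewrite tabs // app_tables_enc /formula_tables feval_App (map_as_mkseq (Var 0)) size_args.
congr truth_fun; apply: eq_in_mkseq => l lt_l; rewrite -size_args in lt_l.
by rewrite digit_u //; case: (g_tabs l lt_l) => _ /tables_areP->.
Qed.

Lemma incl_cert_sound :
  incl_cert_spec w x -> forall phi, Taut L M1 phi -> Taut L M2 phi.
Proof.
move=> cert phi [wf_phi taut1]; split=> // v val_v.
have v_lt n : v n < nv M2 + 1 by rewrite addn1.
have [||t lt_t /tables_areP tabs] := @incl_cert_tables (rename v phi) cert.
- by rewrite wf_rename.
- exact: vars_below_rename.
have des1 : designated_col w x true t.
  move=> r lt_r; rewrite tabs // xdes_enc cmem_enc /formula_tables feval_rename.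
  by apply: taut1 => n; rewrite /= addn1; apply: digit_lt.
have K_gt0 : 0 < nv M2 + 1 by rewrite addn1.
have [r0 lt_r0 digit_r0] := @digits_exist _ _ id K_gt0 (fun _ lt => lt).
have := cert.2.2 t lt_t des1 r0; rewrite nrows_enc tabs ?nrows_enc // xdes_enc cmem_enc.
by rewrite /formula_tables feval_rename (eq_feval _ _ (fun n => digit_r0 (v n) (v_lt n))); apply.
Qed.

Lemma valid_node_formula :
  (forall t, t < cfst w -> valid_node w x t) -> forall t, t < cfst w ->
  exists f, [/\ wf L f, vars_below (nv M2 + 1) f & tables_are w x t (formula_tables M1 M2 f)].
Proof.
move=> valid; elim/ltn_ind => t IH lt_t.
case: (valid t lt_t) => [[_ [lt_dat /tables_areP tabs]]|[_ [in_L [lt_args /tables_areP tabs]]]].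
  exists (Var (cdat w t)); split=> //=; first by rewrite -(xnv_enc L M1 M2 false).
  by apply/tables_areP => j r /tabs->; rewrite /var_tables xnv_enc.
set i := ctag w t - 1 in in_L lt_args tabs.
rewrite xlang_enc cdrop_enc_neq0 in in_L; rewrite xlang_enc cnth_enc in lt_args.
have [g g_ok] := fin_choice (Var 0) (fun l lt_l =>
  IH _ (lt_args l lt_l) (ltn_trans (lt_args l lt_l) lt_t)).
exists (App i (mkseq g (nth 0 L i))); split.
- rewrite wf_App in_L size_mkseq eqxx /mkseq all_map.
  by apply/allP => l; rewrite mem_iota add0n => /g_ok[].
- by rewrite /= /mkseq all_map; apply/allP => l; rewrite mem_iota add0n => /g_ok[].
apply/tables_areP => j r lt_r; rewrite tabs // app_tables_enc /formula_tables feval_App.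
by rewrite map_mkseq; congr truth_fun; apply: eq_in_mkseq => l /g_ok[_ _ /tables_areP->].
Qed.

Lemma nonincl_cert_sound :
  nonincl_cert_spec w x -> ~ (forall phi, Taut L M1 phi -> Taut L M2 phi).
Proof.
move=> [valid [t [lt_t [des1 not_des2]]]] incl.
have [f [wf_f below_f /tables_areP tabs]] := valid_node_formula valid lt_t.
have taut1 : Taut L M1 f.
  split=> // u val_u; have u_lt v : u v < nv M1 + 1 by rewrite addn1.
  have base_gt0 : 0 < nv M1 + 1 by rewrite addn1.
  have [r lt_r digit_r] := @digits_exist _ (nv M2 + 1) u base_gt0 (fun v _ => u_lt v).
  have := des1 r; rewrite nrows_enc tabs ?nrows_enc // xdes_enc cmem_enc /formula_tables.
  by rewrite (feval_eq_below _ below_f digit_r); apply.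
apply: not_des2 => r lt_r; rewrite tabs // xdes_enc cmem_enc.
by apply: (incl f taut1).2 => n; rewrite /= addn1; apply: digit_lt.
Qed.

End Soundness.

(** * Existence of a certificate *)

(* Derivations are the uncoded form of witnesses. *)
Record node := Node { ntag : nat; ndat : nat; ntab : bool -> nat -> nat }.
Definition node0 := Node 0 0 (fun _ _ => 0).

Section Completeness.
Variables (L : language) (M1 M2 : logic).
Local Notation x := (enc_inst L M1 M2).
Local Notation base j := (nv (side M1 M2 j) + 1).
Local Notation rows j := ((nv (side M1 M2 j) + 1) ^ (nv M2 + 1)).

Definition node_valid (d : seq node) t :=
  let e := nth node0 d t in
  (ntag e = 0 /\ ndat e < nv M2 + 1 /\
     forall j r, r < rows j -> ntab e j r = digit (base j) r (ndat e)) \/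
  (ntag e <> 0 /\ ntag e - 1 < size L /\
     (forall l, l < nth 0 L (ntag e - 1) -> cnth (ndat e) l < t) /\
     forall j r, r < rows j -> ntab e j r =
       truth_fun (side M1 M2 j) (ntag e - 1)
         (mkseq (fun l => ntab (nth node0 d (cnth (ndat e) l)) j r) (nth 0 L (ntag e - 1)))).

Definition derivation d := forall t, t < size d -> node_valid d t.

Lemma node_valid_rcons d e t : t < size d -> node_valid d t -> node_valid (rcons d e) t.
Proof.
rewrite /node_valid nth_rcons => lt_t; case: ltnP lt_t => // lt_t _.
case=> [|[tag_neq0 [lt_i [lt_args tabs]]]]; [by left | right; do 3!split=> //].
move=> j r lt_r; rewrite tabs //; congr truth_fun; apply: eq_in_mkseq => l /lt_args lt_l.
by rewrite nth_rcons (ltn_trans lt_l lt_t).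
Qed.

Lemma derivation_rcons d e :
  derivation d -> node_valid (rcons d e) (size d) -> derivation (rcons d e).
Proof.
move=> der_d valid_e t; rewrite size_rcons ltnS leq_eqVlt => /orP[/eqP->|lt_t] //.
exact: node_valid_rcons (der_d t lt_t).
Qed.

Lemma derivation_tab_lt d t j r :
  derivation d -> t < size d -> r < rows j -> ntab (nth node0 d t) j r < base j.
Proof.
move=> der_d lt_t lt_r.
case: (der_d t lt_t) => [[_ [_ ->]]|[_ [_ [_ ->]]]] //; first by apply: digit_lt; rewrite addn1.
by rewrite addn1; case: j {lt_r}; apply: ltn_pmod.
Qed.

Definition table_key (e : node) :=
  (mkseq (ntab e true) (rows true), mkseq (ntab e false) (rows false)).
Definition nkeys d := size (undup (map table_key d)).

Definition all_keys :=
  [seq (a, b) | a <- allseqs (base true) (rows true), b <- allseqs (base false) (rows false)].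

Lemma nkeys_bound d : derivation d -> nkeys d <= size all_keys.
Proof.
move=> der_d; apply: uniq_leq_size; first exact: undup_uniq.
move=> k; rewrite mem_undup (map_as_mkseq node0) => /mapP[t].
rewrite mem_iota add0n => lt_t ->.
have tabs_in j : mkseq (ntab (nth node0 d t) j) (rows j) \in allseqs (base j) (rows j).
  rewrite -{2}(size_mkseq (ntab (nth node0 d t) j) (rows j)); apply: mem_allseqs.
  by apply/allP => a /mapP[r]; rewrite mem_iota add0n => lt_r ->; apply: derivation_tab_lt.
exact: allpairs_f (tabs_in true) (tabs_in false).
Qed.

Lemma max_derivation :
  exists2 D, derivation D & forall d, derivation d -> nkeys d <= nkeys D.
Proof.
pose P n := exists2 d, derivation d & nkeys d = n.
have [|m [d der_d <-]|n [D der_D <-] max_n] := @bounded_ex_max P 0 (size all_keys).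
- by exists [::].
- exact: nkeys_bound.
- by exists D => // d der_d; apply: max_n; exists d.
Qed.

Definition node_code (e : node) :=
  cpair (cpair (enc_seq id (mkseq (ntab e true) (rows true)))
               (enc_seq id (mkseq (ntab e false) (rows false))))
        (cpair (ntag e) (ndat e)).

Definition witness_of (d : seq node) := cpair (size d) (enc_seq id (map node_code d)).

Lemma witness_size d : cfst (witness_of d) = size d.
Proof. exact: cfst_pair. Qed.

Lemma witness_node d t :
  t < size d -> cnth (csnd (witness_of d)) t = node_code (nth node0 d t).
Proof. by move=> lt_t; rewrite csnd_pair cnth_enc (nth_map node0). Qed.

Lemma cell_witness d j t r :
  t < size d -> r < rows j -> cell (witness_of d) j t r = ntab (nth node0 d t) j r.
Proof.
move=> lt_t lt_r; rewrite /cell witness_node // cfst_pair.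
by case: j lt_r => lt_r; rewrite ?cfst_pair ?csnd_pair cnth_enc nth_mkseq.
Qed.

Lemma ctag_witness d t : t < size d -> ctag (witness_of d) t = ntag (nth node0 d t).
Proof. by move=> lt_t; rewrite /ctag witness_node // csnd_pair cfst_pair. Qed.

Lemma cdat_witness d t : t < size d -> cdat (witness_of d) t = ndat (nth node0 d t).
Proof. by move=> lt_t; rewrite /cdat witness_node // !csnd_pair. Qed.

Lemma tables_are_witness d t f : t < size d ->
  (forall j r, r < rows j -> ntab (nth node0 d t) j r = f j r) -> tables_are (witness_of d) x t f.
Proof.
move=> lt_t tabs; apply/tables_areP => j r; rewrite nrows_enc => lt_r.
by rewrite cell_witness ?tabs.
Qed.

Variable D : seq node.
Hypotheses (der_D : derivation D) (max_D : forall d, derivation d -> nkeys d <= nkeys D).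

(* A derivation with the largest number of distinct table pairs leaves no room for a new one. *)
Lemma max_derivation_absorbs e : node_valid (rcons D e) (size D) ->
  exists2 t, t < size D & forall j r, r < rows j -> ntab (nth node0 D t) j r = ntab e j r.
Proof.
move=> valid_e; have : table_key e \in map table_key D.
  apply: contraLR (max_D (derivation_rcons der_D valid_e)) => key_new.
  by rewrite -ltnNge /nkeys map_rcons size_undup_rcons.
rewrite (map_as_mkseq node0) => /mapP[t]; rewrite mem_iota add0n => lt_t [eq_true eq_false].
exists t => // j r lt_r.
by case: j lt_r => lt_r; rewrite -(nth_mkseq 0 _ lt_r) -?eq_true -?eq_false nth_mkseq.
Qed.

Lemma max_derivation_has_vars v : v < nv M2 + 1 -> exists2 t, t < size D &
  forall j r, r < rows j -> ntab (nth node0 D t) j r = digit (base j) r v.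
Proof.
move=> lt_v; pose e := Node 0 v (fun j r => digit (base j) r v).
have [|t lt_t tabs] := @max_derivation_absorbs e; last by exists t.
by rewrite /node_valid nth_rcons ltnn eqxx; left.
Qed.

Lemma max_derivation_size_gt0 : 0 < size D.
Proof.
have [|t lt_t _] := @max_derivation_has_vars 0; first by rewrite addn1.
exact: leq_ltn_trans lt_t.
Qed.

Lemma max_derivation_closed i u : i < size L -> exists2 t, t < size D &
  forall j r, r < rows j -> ntab (nth node0 D t) j r =
    truth_fun (side M1 M2 j) i
      (mkseq (fun l => ntab (nth node0 D (digit (size D) u l)) j r) (nth 0 L i)).
Proof.
move=> lt_i; have D_gt0 := max_derivation_size_gt0.
pose args := enc_seq id (mkseq (digit (size D) u) (nth 0 L i)).
have args_nth l : l < nth 0 L i -> cnth args l = digit (size D) u l.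
  by move=> lt_l; rewrite cnth_enc nth_mkseq.
pose e := Node i.+1 args (fun j r => truth_fun (side M1 M2 j) i
  (mkseq (fun l => ntab (nth node0 D (digit (size D) u l)) j r) (nth 0 L i))).
have [|t lt_t tabs] := @max_derivation_absorbs e; last by exists t.
rewrite /node_valid nth_rcons ltnn eqxx /= subn1; right; do 3!split=> //.
  by move=> l /args_nth->; apply: digit_lt.
move=> j r _; congr truth_fun; apply: eq_in_mkseq => l lt_l.
by rewrite args_nth // nth_rcons digit_lt.
Qed.

Lemma valid_node_witness t : t < size D -> valid_node (witness_of D) x t.
Proof.
move=> lt_t; rewrite /valid_node ctag_witness // cdat_witness //.
case: (der_D lt_t) => [[tag0 [lt_dat tabs]]|[tag_neq0 [lt_i [lt_args tabs]]]].
  left; split=> //; split; first by rewrite xnv_enc.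
  by apply: tables_are_witness => // j r lt_r; rewrite tabs // /var_tables xnv_enc.
right; split=> //; rewrite xlang_enc cdrop_enc_neq0 cnth_enc; do 2!split=> //.
apply: tables_are_witness => // j r lt_r; rewrite tabs // app_tables_enc; congr truth_fun.
apply: eq_in_mkseq => l lt_l; rewrite cell_witness //.
exact: ltn_trans (lt_args l lt_l) lt_t.
Qed.

Lemma max_derivation_cert :
  incl_cert_spec (witness_of D) x \/ nonincl_cert_spec (witness_of D) x.
Proof.
set w := witness_of D; have D_gt0 := max_derivation_size_gt0.
have [bad|no_bad] := classic
  (exists t, t < cfst w /\ (designated_col w x true t /\ ~ designated_col w x false t)).
  by right; split=> // t; rewrite witness_size; apply: valid_node_witness.
left; split; last split.
- move=> v; rewrite xnv_enc witness_size => /max_derivation_has_vars[t lt_t tabs].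
  exists t; split=> //; apply: tables_are_witness => // j r lt_r.
  by rewrite tabs // /var_tables xnv_enc.
- move=> i _; rewrite xlang_enc cdrop_enc_neq0 witness_size cnth_enc => lt_i u _.
  have [t lt_t tabs] := max_derivation_closed u lt_i.
  exists t; split=> //; apply: tables_are_witness => // j r lt_r.
  rewrite tabs // app_tables_enc; congr truth_fun; apply: eq_in_mkseq => l _.
  by rewrite cell_witness // digit_lt.
- by move=> t lt_t des1; apply: NNPP => not_des2; apply: no_bad; exists t.
Qed.

End Completeness.

Lemma cert_exists L M1 M2 : exists w,
  incl_cert_spec w (enc_inst L M1 M2) \/ nonincl_cert_spec w (enc_inst L M1 M2).
Proof.
have [D der_D max_D] := max_derivation L M1 M2.
by exists (witness_of M1 M2 D); apply: max_derivation_cert.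
Qed.

(** * The decision procedures *)

Definition pcheck (e : aexp) :=
  PComp (compile e) [:: op2 pcons (PProj 0) (op2 pcons (PProj 1) PZero)].

Lemma pval_check e w x : pval (pcheck e) [:: w; x] = aeval e [:: w; x].
Proof. by rewrite -pval_compile /= !pval_cons. Qed.

Lemma computes_check e w x : computes (pcheck e) [:: w; x] (aeval e [:: w; x]).
Proof. by rewrite -pval_check; apply: computes_pval; rewrite /= mu_free_compile. Qed.

Definition no_cert := ENot (EOr (incl_cert 0) (nonincl_cert 0)).

Lemma no_cert_eq0 w x :
  aeval no_cert [:: w; x] = 0 <-> incl_cert_spec w x \/ nonincl_cert_spec w x.
Proof.
have aeval_not e r : aeval (ENot e) r = (aeval e r == 0) by [].
have aholds_or a b r : aholds (EOr a b) r <-> aholds a r \/ aholds b r by [].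
rewrite /no_cert aeval_not -incl_certP -nonincl_certP -aholds_or -aevalP.
by case: (aeval _ _ == 0).
Qed.

(* Search for the least witness of either certificate, then check which one it is. *)
Definition pincl := PComp (pcheck (incl_cert 0)) [:: PMu (pcheck no_cert); PProj 0].

Lemma pincl_decides L M1 M2 : exists b, computes pincl [:: enc_inst L M1 M2] b /\
  (b != 0 <-> forall phi, Taut L M1 phi -> Taut L M2 phi).
Proof.
set x := enc_inst L M1 M2; pose F w := aeval no_cert [:: w; x].
have F_eq0 : exists w, F w == 0.
  by have [w cert] := cert_exists L M1 M2; exists w; apply/eqP/no_cert_eq0.
have [n Fn0 min_n] := ex_minnP F_eq0.
exists (aeval (incl_cert 0) [:: n; x]); split.
  apply: computes_comp (computes_check _ _ _); constructor; last by constructor; [exists 1|].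
  apply: (computes_mu (F := F)) (fun s => computes_check _ _ _) (eqP Fn0) _ => m lt_m.
  by apply: contraTneq lt_m => /eqP /min_n; rewrite leqNgt.
rewrite aevalP incl_certP; split; first exact: incl_cert_sound.
by move=> incl; case/no_cert_eq0: (eqP Fn0) => // /nonincl_cert_sound.
Qed.

Definition pswap := op2 pcpair pfst (op2 pcpair (PComp psnd [:: psnd]) (PComp pfst [:: psnd])).

Lemma computes_swap L M1 M2 : computes pswap [:: enc_inst L M1 M2] (enc_inst L M2 M1).
Proof.
have -> : enc_inst L M2 M1 = pval pswap [:: enc_inst L M1 M2].
  by rewrite /= !pval_snd !pval_fst !pval_cpair /enc_inst !csnd_pair !cfst_pair.
exact: computes_pval.
Qed.

Definition pand := PComp pif [:: PProj 0; PComp psgn [:: PProj 1]; pconst 0].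

Lemma pval_and a b : pval pand [:: a; b] = (a != 0) && (b != 0).
Proof. by rewrite /= pval_if pval_sgn pval_const; case: a. Qed.

Definition peq := op2 pand pincl (PComp pincl [:: pswap]).

Lemma peq_decides L M1 M2 : exists b, computes peq [:: enc_inst L M1 M2] b /\
  (b != 0 <-> forall phi, Taut L M1 phi <-> Taut L M2 phi).
Proof.
have [b12 [comp12 dec12]] := pincl_decides L M1 M2.
have [b21 [comp21 dec21]] := pincl_decides L M2 M1.
exists ((b12 != 0) && (b21 != 0)); split.
  apply: (@computes_comp _ _ _ [:: b12; b21]); last by rewrite -pval_and; apply: computes_pval.
  by do !constructor => //; apply: computes_comp comp21; do !constructor; apply: computes_swap.
rewrite nat_of_bool_neq0; split=> [/andP[/dec12 incl12 /dec21 incl21] phi|equiv].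
  by split; [apply: incl12 | apply: incl21].
by apply/andP; split; [apply/dec12 | apply/dec21] => phi /equiv.
Qed.

Lemma decidable_inst_computes (Q : language -> logic -> logic -> Prop) p :
  (forall L M1 M2, exists b, computes p [:: enc_inst L M1 M2] b /\ (b != 0 <-> Q L M1 M2)) ->
  decidable_inst Q.
Proof.
by move=> dec_p; exists p => L M1 M2; have [b [[k eval_b] Qb]] := dec_p L M1 M2; exists k, b.
Qed.

Theorem corollary1 :
  decidable_inst (fun L M1 M2 => forall phi : form, Taut L M1 phi <-> Taut L M2 phi) /\
  decidable_inst (fun L M1 M2 => forall phi : form, Taut L M1 phi -> Taut L M2 phi).
Proof.
by split; apply: decidable_inst_computes; [apply: peq_decides | apply: pincl_decides].
Qed.
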